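(* Let $d\ge 3$ and let $\mathcal M$ be a model of $\mathrm{PQM}_d$ with domain $\mathbb M$. Then there exists a function $\kappa:\mathbb M\to\mathbb H_d$ such that for all $m\in\mathbb M$ and all $p\in\mathbb H_d$, $$p\in F^{\mathcal M}(m)\iff \kappa(m)\le p,$$ equivalently $[m:p]^{\mathcal M}\iff[\kappa(m):p]^{\mathcal H_d}$. (That is, each $F^{\mathcal M}(m)$ has a least element $\kappa(m)$ and is the principal up-set it generates.)
   Context: Notation. For $d\ge 1$, $\mathbb H_d$ is the set of complex linear subspaces of $\mathbb C^d$, ordered by inclusion $\le$, with $\top=\mathbb C^d$, $\bot=\{0\}$, $p^\bot$ the orthogonal complement, $p\wedge q=p\cap q$ and $p\vee q=p+q$. $\mathbb U_d$ is the set of unitary operators on $\mathbb C^d$, and for $U\in\mathbb U_d$, $p\in\mathbb H_d$, $U(p)=\{Uv: v\in p\}$. The Sasaki projection is $p\,\&\,q := q\cap(q^\bot+p)$. Subspaces $p,q$ are compatible iff $p=(p\wedge q)\vee(p\wedge q^\bot)$. Language $\mathcal L_d$: a first-order language without equality and without constants, having a unary function symbol $u_U$ for each $U\in\mathbb U_d$, a unary function symbol $\pi_q$ for each $q\in\mathbb H_d$, and a unary relation symbol $[\,\cdot:p]$ for each $p\in\mathbb H_d$. Theory $\mathrm{PQM}_d$ (over $\mathcal L_d$) has the following axioms, for all $p,q\in\mathbb H_d$ and $U\in\mathbb U_d$: ($\neg\bot$) $\exists x\,\neg[x:\bot]$; ($\top$) $\forall x\,[x:\top]$; ($\le$) if $p\le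 q$: $\forall x\,([x:p]\to[x:q])$; ($\wedge$) if $p,q$ are compatible: $\forall x\,([x:p]\wedge[x:q]\to[x:p\wedge q])$; ($\pi_i$) $\forall x\,([x:p]\to[\pi_q(x):p\,\&\,q])$; ($\pi_c$) if $p\le q$: $\forall x\,([\pi_p(\pi_q(x)):\bot]\to[\pi_p(x):\bot])$; ($\pi_\bot$) $\forall x\,([\pi_q(x):\bot]\to[x:q^\bot])$; ($u_i$) $\forall x\,([x:p]\to[u_U(x):U(p)])$; ($u_e$) $\forall x\,([u_U(x):p]\to[x:U^{-1}(p)])$. Hilbert model $\mathcal H_d$: the $\mathcal L_d$-structure with domain $\mathbb H_d$, $u_U^{\mathcal H_d}(x)=U(x)$, $\pi_q^{\mathcal H_d}(x)=x\,\&\,q$, and $[x:p]^{\mathcal H_d}$ holds iff $x\le p$. Filter: for an $\mathcal L_d$-structure $\mathcal M$ with domain $\mathbb M$ and $m\in\mathbb M$, $F^{\mathcal M}(m)=\{p\in\mathbb H_d : [m:p]^{\mathcal M}\}$, where $[\,\cdot:p]^{\mathcal M}$ is the interpretation of the relation symbol $[\,\cdot:p]$ in $\mathcal M$. *)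

From HB Require Import structures.
From mathcomp Require Import all_boot all_order all_algebra.
From mathcomp Require Import complex.
From mathcomp Require Import Rstruct.
Set Implicit Arguments. Unset Strict Implicit. Unset Printing Implicit Defensive.
Import Order.TTheory GRing.Theory Num.Theory.
Local Open Scope ring_scope.

Definition CC : numClosedFieldType := (Rdefinitions.R)[i].

(* Vectors of C^d are row vectors 'rV[CC]_d; a subspace is represented by the
   unique canonical matrix <<A>> generating it (mxalgebra's genmx), so that
   subspaces are a type with Leibniz equality. *)
Definition subsp (d : nat) := {A : 'M[CC]_d | <<A>>%MS == A}.

Lemma genmx_canon (d : nat) (A : 'M[CC]_d) : <<(<<A>>%MS)>>%MS == <<A>>%MS.
Proof. by rewrite genmx_id. Qed.

Definition mkS (d : nat) (A : 'M[CC]_d) : subsp d :=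
  exist _ <<A>>%MS (genmx_canon A).

Definition smx (d : nat) (p : subsp d) : 'M[CC]_d := proj1_sig p.

Definition sle (d : nat) (p q : subsp d) : Prop := (smx p <= smx q)%MS.
Definition stop (d : nat) : subsp d := mkS (1%:M : 'M[CC]_d).
Definition sbot (d : nat) : subsp d := mkS (0 : 'M[CC]_d).
Definition smeet (d : nat) (p q : subsp d) : subsp d := mkS (smx p :&: smx q)%MS.
Definition sjoin (d : nat) (p q : subsp d) : subsp d := mkS (smx p + smx q)%MS.

Definition adj (d : nat) (A : 'M[CC]_d) : 'M[CC]_d := (map_mx Num.conj A)^T.

(* Orthogonal complement w.r.t. <u,v> = sum_i u_i * conj(v_i):
   the row vectors u with u *m adj A = 0 (left kernel of adj A). *)
Definition sperp (d : nat) (p : subsp d) : subsp d := mkS (kermx (adj (smx p))).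

Definition sasaki (d : nat) (p q : subsp d) : subsp d :=
  smeet q (sjoin (sperp q) p).

Definition compatible (d : nat) (p q : subsp d) : Prop :=
  p = sjoin (smeet p q) (smeet p (sperp q)).

(* Unitary operators on C^d (as matrices acting on column vectors). *)
Definition unitary (d : nat) : Type :=
  {U : 'M[CC]_d | U *m adj U == 1%:M}.

Definition umx (d : nat) (U : unitary d) : 'M[CC]_d := proj1_sig U.

(* U(p) = {U v : v in p}; with row vectors v^T, (U v)^T = v^T *m U^T. *)
Definition uimg (d : nat) (U : unitary d) (p : subsp d) : subsp d :=
  mkS (smx p *m (umx U)^T).
Definition uinvimg (d : nat) (U : unitary d) (p : subsp d) : subsp d :=
  mkS (smx p *m (invmx (umx U))^T).

(* L_d-structures: domain, interpretations of u_U, pi_q and [ . : p ]. *)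
Record Lstruct (d : nat) := {
  dom : Type;
  u_ : unitary d -> dom -> dom;
  pi_ : subsp d -> dom -> dom;
  rel_ : dom -> subsp d -> Prop
}.
Arguments dom {d} l.
Arguments u_ {d} l _ _.
Arguments pi_ {d} l _ _.
Arguments rel_ {d} l _ _.

Definition PQM_model (d : nat) (M : Lstruct d) : Prop :=
  (exists x : dom M, ~ rel_ M x (sbot d)) /\
  (forall x : dom M, rel_ M x (stop d)) /\
  (forall p q : subsp d, sle p q -> forall x, rel_ M x p -> rel_ M x q) /\
  (forall p q : subsp d, compatible p q ->
      forall x, rel_ M x p -> rel_ M x q -> rel_ M x (smeet p q)) /\
  (forall p q : subsp d, forall x, rel_ M x p -> rel_ M (pi_ M q x) (sasaki p q)) /\
  (forall p q : subsp d, sle p q ->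
      forall x, rel_ M (pi_ M p (pi_ M q x)) (sbot d) -> rel_ M (pi_ M p x) (sbot d)) /\
  (forall q : subsp d, forall x, rel_ M (pi_ M q x) (sbot d) -> rel_ M x (sperp q)) /\
  (forall (U : unitary d) (p : subsp d) x, rel_ M x p -> rel_ M (u_ M U x) (uimg U p)) /\
  (forall (U : unitary d) (p : subsp d) x, rel_ M (u_ M U x) p -> rel_ M x (uinvimg U p)).

Definition filt (d : nat) (M : Lstruct d) (m : dom M) : subsp d -> Prop :=
  fun p => rel_ M m p.

From mathcomp Require Import all_boot all_order all_algebra.
From mathcomp Require Import complex Rstruct.
From mathcomp Require Import ring lra zify.
From Stdlib Require Import Classical ClassicalEpsilon.
Set Implicit Arguments. Unset Strict Implicit. Unset Printing Implicit Defensive.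
Import Order.TTheory GRing.Theory Num.Theory.
Local Open Scope ring_scope.

(* A filter F(m) contains [top] and is upward closed, so it is principal as
   soon as it is closed under meets; by a modular-lattice induction it suffices
   to treat meets p /\ q of codimension one in p.  Applying pi along
   (p /\ q)^perp turns p and q into a line and a subspace that meets it
   trivially, and the Sasaki projection of one on the other is again at most a
   line; so everything reduces to showing that no element can lie in two
   distinct lines, for then pi_bot gives m in (p /\ q)^perp^perp = p /\ q.
   For unit vectors a, b with real inner product c in (0, 1), an element in
   <a> and <b> is, by pi along N^perp, also in every line <N> for which the
   rejections of a and b from N are orthogonal.  Using a third orthonormal
   direction (here d >= 3 is needed) one finds, if 3c <= 1, two orthogonal
   such lines, which gives bottom; otherwise two such unit vectors with inner
   product (3c - 1)/(1 + c), and finitely many such steps reach 3c <= 1. *)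

Section RankFacts.
Variable F : fieldType.

Lemma exists_nonzero_row m n (A : 'M[F]_(m, n)) : A != 0 -> exists i, row i A != 0.
Proof.
move=> nzA; have : ~~ (A <= (0 : 'M_n))%MS by rewrite submx0.
by case/row_subPn => i; rewrite submx0; exists i.
Qed.

Lemma mxrank1_eqmx_rV m n (A : 'M[F]_(m, n)) : \rank A = 1%N ->
  exists2 u : 'rV_n, u != 0 & (A :=: u)%MS.
Proof.
move=> rA; have [|i nzi] := exists_nonzero_row (A := A); first by rewrite -mxrank_eq0 rA.
exists (row i A) => //; apply/eqmxP; rewrite row_sub andbT.
by rewrite -(mxrank_leqif_sup (row_sub i A)) rank_rV nzi rA.
Qed.

Lemma mxrank_adds_row m n (A : 'M[F]_(m, n)) (r : 'rV_n) :
  ~~ (r <= A)%MS -> \rank (A + r)%MS = (\rank A).+1.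
Proof.
move=> nrA; apply/eqP; rewrite eqn_leq; apply/andP; split.
  by rewrite (leq_trans (mxrank_adds_leqif A r).1) // -[(\rank A).+1]addn1 leq_add2l rank_leq_row.
have : (A < A + r)%MS.
  rewrite ltmxE addsmxSl; apply: contra nrA; exact: submx_trans (addsmxSr _ _).
by rewrite ltmxErank => /andP[].
Qed.

End RankFacts.

Section Hermitian.
Variable C : numClosedFieldType.

Definition adjmx m n (A : 'M[C]_(m, n)) : 'M[C]_(n, m) := (map_mx Num.conj A)^T.

Lemma adjmxM m n p (A : 'M[C]_(m, n)) (B : 'M[C]_(n, p)) :
  adjmx (A *m B) = adjmx B *m adjmx A.
Proof. by rewrite /adjmx map_mxM trmx_mul. Qed.

Lemma adjmxK m n (A : 'M[C]_(m, n)) : adjmx (adjmx A) = A.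
Proof. by apply/matrixP=> i j; rewrite !mxE conjCK. Qed.

Lemma adjmx_eq0 m n (A : 'M[C]_(m, n)) : (adjmx A == 0) = (A == 0).
Proof.
suff adj0 k l : adjmx (0 : 'M[C]_(k, l)) = 0.
  by apply/eqP/eqP => [h|->]; rewrite ?adj0 // -[A]adjmxK h adj0.
by apply/matrixP=> i j; rewrite !mxE conjC0.
Qed.

Lemma mxrank_adjmx m n (A : 'M[C]_(m, n)) : \rank (adjmx A) = \rank A.
Proof. by rewrite mxrank_tr mxrank_map. Qed.

Lemma mulmx_adjmx_eq0 m n (A : 'M[C]_(m, n)) : (A *m adjmx A == 0) = (A == 0).
Proof.
apply/eqP/eqP => [AA0|->]; last by rewrite mul0mx.
apply/matrixP => i j; have /eqP := congr1 (fun B : 'M[C]_m => B i i) AA0.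
rewrite !mxE psumr_eq0 => [/allP/(_ j (mem_index_enum _))|k _].
  by rewrite !mxE -normCK expf_eq0 /= normr_eq0 => /eqP.
by rewrite !mxE -normCK exprn_ge0.
Qed.

Lemma adjmx_orthoC m1 m2 n (A : 'M[C]_(m1, n)) (B : 'M[C]_(m2, n)) :
  (A *m adjmx B == 0) = (B *m adjmx A == 0).
Proof. by rewrite -adjmx_eq0 adjmxM adjmxK. Qed.

Definition perpmx m n (A : 'M[C]_(m, n)) : 'M[C]_n := kermx (adjmx A).

Lemma sub_perpmx m1 m2 n (A : 'M[C]_(m1, n)) (B : 'M[C]_(m2, n)) :
  (B <= perpmx A)%MS = (B *m adjmx A == 0).
Proof. exact: sub_kermx. Qed.

Lemma sub_perpmxC m1 m2 n (A : 'M[C]_(m1, n)) (B : 'M[C]_(m2, n)) :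
  (B <= perpmx A)%MS = (A <= perpmx B)%MS.
Proof. by rewrite !sub_perpmx adjmx_orthoC. Qed.

Lemma mxrank_perpmx m n (A : 'M[C]_(m, n)) : \rank (perpmx A) = (n - \rank A)%N.
Proof. by rewrite mxrank_ker mxrank_adjmx. Qed.

Lemma perpmx_sub0 m1 m2 n (A : 'M[C]_(m1, n)) (B : 'M[C]_(m2, n)) :
  (B <= A)%MS -> (B <= perpmx A)%MS -> B = 0.
Proof.
move=> /submxP[D ->]; rewrite sub_perpmx => /eqP BA0.
by apply/eqP; rewrite -mulmx_adjmx_eq0 adjmxM mulmxA BA0 mul0mx.
Qed.

Lemma perpmxS m1 m2 n (A : 'M[C]_(m1, n)) (B : 'M[C]_(m2, n)) :
  (A <= B)%MS -> (perpmx B <= perpmx A)%MS.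
Proof. by move=> sAB; rewrite sub_perpmxC (submx_trans sAB) // -sub_perpmxC. Qed.

Lemma eqmx_perpmx m1 m2 n (A : 'M[C]_(m1, n)) (B : 'M[C]_(m2, n)) :
  (A :=: B)%MS -> (perpmx A :=: perpmx B)%MS.
Proof. by move=> eqAB; apply/eqmxP; rewrite !perpmxS ?eqAB. Qed.

Lemma capmx_perpmx m n (A : 'M[C]_(m, n)) : (A :&: perpmx A = 0)%MS.
Proof. exact: perpmx_sub0 (capmxSl _ _) (capmxSr _ _). Qed.

Lemma perpmxK m n (A : 'M[C]_(m, n)) : (perpmx (perpmx A) :=: A)%MS.
Proof.
have sA : (A <= perpmx (perpmx A))%MS by rewrite -sub_perpmxC.
apply/eqmxP; rewrite -{1}sub_perpmxC submx_refl andbT.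
by rewrite -(mxrank_leqif_sup sA) !mxrank_perpmx subKn ?rank_leq_col.
Qed.

Lemma addsmx_perpmx_full m n (A : 'M[C]_(m, n)) : row_full (A + perpmx A)%MS.
Proof.
apply/eqP; have := mxrank_sum_cap A (perpmx A).
by rewrite capmx_perpmx mxrank0 addn0 mxrank_perpmx => ->; rewrite subnKC ?rank_leq_col.
Qed.

Definition ip n (u v : 'rV[C]_n) : C := (u *m adjmx v) 0 0.

Lemma ipE n (u v : 'rV[C]_n) : ip u v = \sum_i u 0 i * (v 0 i)^*.
Proof. by rewrite /ip mxE; apply: eq_bigr => i _; rewrite !mxE. Qed.

Lemma ipC n (u v : 'rV[C]_n) : ip v u = (ip u v)^*.
Proof.
rewrite !ipE rmorph_sum; apply: eq_bigr => i _.
by rewrite rmorphM /= conjCK mulrC.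
Qed.

Lemma ipDl n (u v w : 'rV[C]_n) : ip (u + v) w = ip u w + ip v w.
Proof. by rewrite /ip mulmxDl mxE. Qed.

Lemma ipZl n k (u w : 'rV[C]_n) : ip (k *: u) w = k * ip u w.
Proof. by rewrite /ip -scalemxAl mxE. Qed.

Lemma ipBl n (u v w : 'rV[C]_n) : ip (u - v) w = ip u w - ip v w.
Proof. by rewrite ipDl -scaleN1r ipZl mulN1r. Qed.

Lemma ipDr n (u v w : 'rV[C]_n) : ip u (v + w) = ip u v + ip u w.
Proof. by rewrite ipC ipDl rmorphD /= -!ipC. Qed.

Lemma ipBr n (u v w : 'rV[C]_n) : ip u (v - w) = ip u v - ip u w.
Proof. by rewrite ipC ipBl rmorphB /= -!ipC. Qed.

Lemma ipZr n k (u w : 'rV[C]_n) : ip u (k *: w) = k^* * ip u w.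
Proof. by rewrite ipC ipZl rmorphM /= -ipC. Qed.

Lemma ip_real n (u : 'rV[C]_n) : (ip u u)^* = ip u u.
Proof. by rewrite -ipC. Qed.

Lemma ip_ge0 n (u : 'rV[C]_n) : 0 <= ip u u.
Proof. by rewrite ipE sumr_ge0 // => i _; rewrite -normCK exprn_ge0. Qed.

Lemma mx11_eq0 (A : 'M[C]_1) : (A == 0) = (A 0 0 == 0).
Proof.
apply/eqP/eqP => [->|A0]; first by rewrite mxE.
by apply/matrixP => i j; rewrite !ord1 A0 mxE.
Qed.

Lemma ip_eq0 n (u : 'rV[C]_n) : (ip u u == 0) = (u == 0).
Proof. by rewrite -mulmx_adjmx_eq0 mx11_eq0. Qed.

Lemma sub_perpmx_rV n (u v : 'rV[C]_n) : (u <= perpmx v)%MS = (ip u v == 0).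
Proof. by rewrite sub_perpmx mx11_eq0. Qed.

Lemma exists_unit_eqmx n (u : 'rV[C]_n) : u != 0 ->
  exists2 u1 : 'rV[C]_n, ip u1 u1 = 1 & (u1 :=: u)%MS.
Proof.
move=> nzu; set k := (sqrtC (ip u u))^-1.
have uu0 : ip u u != 0 by rewrite ip_eq0.
have kJ : k^* = k.
  by apply/CrealP; rewrite rpredV; apply: ger0_real; rewrite sqrtC_ge0 ip_ge0.
exists (k *: u); last by apply: eqmx_scale; rewrite invr_eq0 sqrtC_eq0.
by rewrite ipZl ipZr kJ mulrA -invfM -expr2 sqrtCK mulVf.
Qed.

Lemma perpmx_sub_split m k n (S : 'M[C]_(m, n)) (Q : 'M[C]_(k, n)) :
  (perpmx Q <= S)%MS -> (S <= (S :&: Q) + (S :&: perpmx Q))%MS.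
Proof.
move=> sQS; have sS : (S <= perpmx Q + (Q :&: S))%MS.
  rewrite (matrix_modl Q sQS) sub_capmx submx_refl andbT submx_full //.
  by rewrite addsmxC addsmx_perpmx_full.
rewrite (submx_trans sS) // addsmxC addsmxS //; first by rewrite capmxC.
by rewrite sub_capmx sQS submx_refl.
Qed.

Lemma mxrank_perpmx_cap m k n (K : 'M[C]_(k, n)) (A : 'M[C]_(m, n)) :
  (K <= A)%MS -> (\rank (perpmx K :&: A) + \rank K)%N = \rank A.
Proof.
move=> sKA; have := mxrank_sum_cap (perpmx K) A.
have /eqP -> : row_full (perpmx K + A)%MS.
  rewrite -sub1mx (submx_trans (submx_full _ (addsmx_perpmx_full K))) //.
  by rewrite addsmxC addsmxS.
by rewrite mxrank_perpmx; have := rank_leq_col K; lia.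
Qed.

Lemma mxrank_sasaki_le m k n (A : 'M[C]_(m, n)) (B : 'M[C]_(k, n)) :
  (\rank (B :&: (perpmx B + A)) <= \rank A)%N.
Proof.
have := mxrank_sum_cap B (perpmx B + A)%MS.
have /eqP -> : row_full (B + (perpmx B + A))%MS.
  by rewrite -sub1mx (submx_trans (submx_full _ (addsmx_perpmx_full B))) // addsmxA addsmxSl.
have := (mxrank_adds_leqif (perpmx B) A).1; rewrite mxrank_perpmx.
by have := rank_leq_col B; lia.
Qed.

Lemma exists_unit_orth2 n (a b : 'rV[C]_n) : (2 < n)%N ->
  exists w : 'rV[C]_n, [/\ ip w w = 1, ip a w = 0 & ip b w = 0].
Proof.
move=> n_gt2; set K := perpmx (a + b)%MS.
have [|i nzi] := exists_nonzero_row (A := K).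
  rewrite -mxrank_eq0 mxrank_perpmx; have := (mxrank_adds_leqif a b).1.
  by have := rank_leq_row a; have := rank_leq_row b; lia.
have [w w1 eqw] := exists_unit_eqmx nzi.
have sK : (w <= K)%MS by rewrite eqw row_sub.
have : (w <= perpmx a)%MS by rewrite (submx_trans sK) ?perpmxS ?addsmxSl.
have : (w <= perpmx b)%MS by rewrite (submx_trans sK) ?perpmxS ?addsmxSr.
rewrite !sub_perpmx_rV => /eqP wb0 /eqP wa0.
by exists w; split; rewrite // ipC ?wa0 ?wb0 conjC0.
Qed.

Definition rejection n (N z : 'rV[C]_n) : 'rV[C]_n := z - (ip z N / ip N N) *: N.

Lemma ip_rejection n (N a b : 'rV[C]_n) : N != 0 ->
  ip (rejection N a) (rejection N b) = ip a b - ip a N * ip N b / ip N N.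
Proof.
move=> nzN; have NN0 : ip N N != 0 by rewrite ip_eq0.
rewrite /rejection ipBl !ipBr !ipZl !ipZr rmorphM /= fmorphV /= ip_real -ipC.
by field.
Qed.

Definition projmx n (N : 'rV[C]_n) : 'M[C]_n :=
  1%:M - (ip N N)^-1 *: (adjmx N *m N).

Lemma projmx_rV n (N z : 'rV[C]_n) : z *m projmx N = rejection N z.
Proof.
rewrite /projmx /rejection mulmxBr mulmx1 -scalemxAr mulmxA.
by rewrite [z *m _]mx11_scalar mul_scalar_mx scalerA mulrC.
Qed.

Lemma projmx_perp m n (N : 'rV[C]_n) (X : 'M[C]_(m, n)) :
  (X <= perpmx N)%MS -> X *m projmx N = X.
Proof.
rewrite sub_perpmx => /eqP XN0.
by rewrite /projmx mulmxBr mulmx1 -scalemxAr mulmxA XN0 mul0mx scaler0 subr0.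
Qed.

Lemma projmx_self n (N : 'rV[C]_n) : N != 0 -> N *m projmx N = 0.
Proof. by move=> nzN; rewrite projmx_rV /rejection divff ?ip_eq0 // scale1r subrr. Qed.

End Hermitian.

Section Subspaces.
Variable d : nat.
Implicit Types (p q : subsp d) (A B : 'M[CC]_d).

Definition lineS (u : 'rV[CC]_d) : subsp d := mkS <<u>>%MS.

Lemma smxE A : (smx (mkS A) :=: A)%MS.
Proof. exact: genmxE. Qed.

Lemma smxK p : mkS (smx p) = p.
Proof. by apply: val_inj; apply/eqP; case: p. Qed.

Lemma mkS_eqmx A B : (A :=: B)%MS -> mkS A = mkS B.
Proof. by move=> eqAB; apply: val_inj; exact: eq_genmx. Qed.

Lemma subsp_eqmx p q : (smx p :=: smx q)%MS -> p = q.
Proof. by move=> eqpq; rewrite -(smxK p) -(smxK q); exact: mkS_eqmx. Qed.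

Lemma smx_line (u : 'rV[CC]_d) : (smx (lineS u) :=: u)%MS.
Proof. exact: eqmx_trans (smxE _) (genmxE _). Qed.

Lemma lineS_eqmx (u v : 'rV[CC]_d) : (u :=: v)%MS -> lineS u = lineS v.
Proof. by move=> equv; rewrite /lineS (eq_genmx equv). Qed.

Lemma smx_bot : smx (sbot d) = 0.
Proof. exact: genmx0. Qed.

Lemma smx_meet p q : (smx (smeet p q) :=: smx p :&: smx q)%MS.
Proof. exact: genmxE. Qed.

Lemma smx_join p q : (smx (sjoin p q) :=: smx p + smx q)%MS.
Proof. exact: genmxE. Qed.

Lemma smx_perp p : (smx (sperp p) :=: perpmx (smx p))%MS.
Proof. exact: genmxE. Qed.

Lemma smx_perpK A : (smx (sperp (sperp (mkS A))) :=: A)%MS.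
Proof.
apply: eqmx_trans (smx_perp _) _; apply: eqmx_trans (eqmx_perpmx (smx_perp _)) _.
exact: eqmx_trans (perpmxK _) (smxE _).
Qed.

Lemma smx_sasaki p q :
  (smx (sasaki p q) :=: smx q :&: (perpmx (smx q) + smx p))%MS.
Proof.
apply: eqmx_trans (smx_meet _ _) (cap_eqmx _ _) => //.
exact: eqmx_trans (smx_join _ _) (adds_eqmx (smx_perp _) _).
Qed.

Lemma smx_sasaki_mkS A B : (smx (sasaki (mkS A) (mkS B)) :=: B :&: (perpmx B + A))%MS.
Proof.
apply: eqmx_trans (smx_sasaki _ _) (cap_eqmx (smxE B) (adds_eqmx _ (smxE A))).
exact: eqmx_perpmx (smxE B).
Qed.

Lemma compatibleP p q :
  (smx p <= smx (smeet p q) + smx (smeet p (sperp q)))%MS -> compatible p q.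
Proof.
move=> sp; apply: subsp_eqmx; apply/eqmxP; rewrite !smx_join sp.
by rewrite addsmx_sub !smx_meet !capmxSl.
Qed.

Lemma compatible_perp_sub p q : (smx (sperp q) <= smx p)%MS -> compatible p q.
Proof.
move=> sqp; apply: compatibleP.
rewrite (adds_eqmx (smx_meet _ _) (eqmx_trans (smx_meet _ _) (cap_eqmx (eqmx_refl _) (smx_perp _)))).
by apply: perpmx_sub_split; rewrite -smx_perp.
Qed.

Lemma compatible_orth p q :
  (smx p <= perpmx (smx q))%MS -> compatible p q /\ smeet p q = sbot d.
Proof.
move=> spq; have pq0 : (smx p :&: smx q = 0)%MS.
  exact: perpmx_sub0 (capmxSr _ _) (submx_trans (capmxSl _ _) spq).
have pqbot : smeet p q = sbot d.
  by apply: subsp_eqmx; rewrite smx_bot -pq0; exact: smx_meet.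
split=> //; apply: compatibleP.
by rewrite addsmxC (submx_trans _ (addsmxSl _ _)) // smx_meet sub_capmx submx_refl smx_perp.
Qed.

Lemma mxrank_le1_lineS p : (\rank (smx p) <= 1)%N ->
  smx p = 0 \/ exists2 u : 'rV[CC]_d, u != 0 & p = lineS u.
Proof.
rewrite leq_eqVlt ltnS leqn0 mxrank_eq0 orbC => /orP[/eqP|/eqP/mxrank1_eqmx_rV[u nz_u eq_pu]].
  by left.
by right; exists u => //; apply: subsp_eqmx; exact: eqmx_trans eq_pu (eqmx_sym (smx_line u)).
Qed.

End Subspaces.

Section PrincipalFilter.
Variables (d : nat) (P : subsp d -> Prop).
Hypothesis P_sub : forall p q, P p -> (smx p <= smx q)%MS -> P q.

Section CorankOne.
Hypothesis P_meet_corank1 : forall p q, P p -> P q ->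
  (\rank (smx p :&: smx q) + 1 = \rank (smx p))%N -> P (smeet p q).
Variables a b : subsp d.
Hypotheses (Pa : P a) (Pb : P b).

Lemma P_mkS_between k (A : 'M[CC]_d) : (smx a :&: smx b <= A)%MS -> (A <= smx a)%MS ->
  (\rank (smx a) - \rank A = k)%N -> P (mkS A).
Proof.
elim: k A => [|k IHk] A sabA sAa rAk.
  have /eqmxP eqAa : (A == smx a)%MS.
    by rewrite -(mxrank_leqif_eq sAa) eqn_leq mxrankS //= -subn_eq0 rAk.
  by rewrite (mkS_eqmx eqAa) smxK.
have : ~~ (smx a <= A)%MS.
  by rewrite -(mxrank_leqif_sup sAa); apply/negP => /eqP eqr; rewrite eqr subnn in rAk.
case/row_subPn => i naiA; set A1 := (A + row i (smx a))%MS.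
have rA1 := mxrank_adds_row naiA.
have PA1 : P (mkS A1).
  apply: IHk; rewrite ?addsmx_sub ?sAa ?row_sub //.
    exact: submx_trans sabA (addsmxSl _ _).
  by rewrite rA1 subnS rAk.
have PAb : P (mkS (A + smx b)%MS) by apply: P_sub Pb _; rewrite smxE addsmxSr.
have eqA : (smx (mkS A1) :&: smx (mkS (A + smx b)%MS) :=: A)%MS.
  apply: eqmx_trans (cap_eqmx (smxE _) (smxE _)) _.
  rewrite capmxC; apply: eqmx_trans (eqmx_sym (matrix_modl _ (addsmxSl _ _))) _.
  apply/eqmxP; rewrite addsmx_sub submx_refl addsmxSl (submx_trans _ sabA) //.
  by rewrite capmxC capmxS // addsmx_sub sAa row_sub.
apply: P_sub (P_meet_corank1 PA1 PAb _) _; first by rewrite eqA smxE rA1 addn1.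
by rewrite smx_meet eqA smxE.
Qed.

Lemma P_meet_of_corank1 : P (smeet a b).
Proof. exact: P_mkS_between (submx_refl _) (capmxSl _ _) erefl. Qed.

End CorankOne.

Hypothesis P_top : P (stop d).
Hypothesis P_meet : forall p q, P p -> P q -> P (smeet p q).

Lemma exists_min_rank n p : (\rank (smx p) <= n)%N -> P p ->
  exists2 k, P k & forall q, P q -> (\rank (smx k) <= \rank (smx q))%N.
Proof.
elim: n p => [|n IHn] p rp Pp.
  by exists p => // q _; move: rp; rewrite leqn0 => /eqP ->.
have [[q Pq rqp]|] := classic (exists2 q, P q & (\rank (smx q) < \rank (smx p))%N).
  by apply: (IHn q) => //; rewrite -ltnS (leq_trans rqp).
move=> nomin; exists p => // q Pq; rewrite leqNgt; apply/negP => rqp.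
by apply: nomin; exists q.
Qed.

Lemma principal_filter : exists k, forall p, P p <-> sle k p.
Proof.
have [k Pk kmin] := exists_min_rank (leqnn _) P_top.
exists k => p; split => [Pp|]; last exact: P_sub.
have Pkp := P_meet Pk Pp.
have skpk : (smx (smeet k p) <= smx k)%MS by rewrite smx_meet capmxSl.
have /eqmxP eqk : (smx (smeet k p) == smx k)%MS.
  by rewrite -(mxrank_leqif_eq skpk) eqn_leq mxrankS // kmin.
by rewrite /sle -eqk smx_meet capmxSr.
Qed.

End PrincipalFilter.

Local Notation RR := Rdefinitions.R.

Definition rc (x : RR) : CC := (x%:C)%C.

Lemma rcJ x : (rc x)^* = rc x. Proof. by apply/CrealP; rewrite complex_real. Qed.
Lemma rcD x y : rc (x + y) = rc x + rc y. Proof. exact: rmorphD. Qed.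
Lemma rcB x y : rc (x - y) = rc x - rc y. Proof. exact: rmorphB. Qed.
Lemma rcM x y : rc (x * y) = rc x * rc y. Proof. exact: rmorphM. Qed.
Lemma rcX x n : rc (x ^+ n) = rc x ^+ n. Proof. exact: rmorphXn. Qed.
Lemma rc0 : rc 0 = 0. Proof. exact: rmorph0. Qed.
Lemma rc1 : rc 1 = 1. Proof. exact: rmorph1. Qed.
Lemma rc_eq0 x : (rc x == 0) = (x == 0). Proof. exact: fmorph_eq0. Qed.
Lemma rc_gt0 x : (0 < rc x) = (0 < x). Proof. exact: ltcR. Qed.

Definition rcE := (rcD, rcB, rcM, rcX).

Lemma sqrtr_sqr (r : RR) : 0 <= r -> Num.sqrt r * Num.sqrt r = r.
Proof. by move=> r_ge0; rewrite -expr2 sqr_sqrtr. Qed.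

Lemma exists_orth_coords (c : RR) : 0 < c -> 3 * c <= 1 ->
  exists s t : RR, s * t = c /\ s * s + t * t = 1 - c.
Proof.
move=> c_gt0 c3; set u := Num.sqrt (1 + c); set v := Num.sqrt (1 - 3 * c).
have uu : u * u = 1 + c by apply: sqrtr_sqr; lra.
have vv : v * v = 1 - 3 * c by apply: sqrtr_sqr; lra.
exists ((u + v) / 2), ((u - v) / 2); split.
  have -> : (u + v) / 2 * ((u - v) / 2) = (u * u - v * v) / 4 by field.
  by rewrite uu vv; field.
have -> : (u + v) / 2 * ((u + v) / 2) + (u - v) / 2 * ((u - v) / 2) =
  (u * u + v * v) / 2 by field.
by rewrite uu vv; field.
Qed.

Lemma exists_phase_real_ip n (a b : 'rV[CC]_n) : ip b b = 1 -> ip a b != 0 ->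
  exists (c : RR) (b1 : 'rV[CC]_n),
    [/\ (b1 :=: b)%MS, ip b1 b1 = 1, ip a b1 = rc c & 0 < c].
Proof.
move=> b1 nz_ab; set g := ip a b; have nz_g : `|g| != 0 by rewrite normr_eq0.
exists (complex.Re `|g|), ((g / `|g|) *: b).
have Reg : rc (complex.Re `|g|) = `|g| by rewrite /rc RRe_real ?normr_real.
split.
- by apply: eqmx_scale; rewrite mulf_neq0 ?invr_eq0.
- rewrite ipZl ipZr b1 mulr1 rmorphM /= fmorphV /= conj_normC.
  by rewrite mulrACA -normCK -invfM -expr2 mulfV // expf_neq0.
- rewrite ipZr rmorphM /= fmorphV /= conj_normC -/g Reg.
  by rewrite mulrAC -normCKC expr2 mulfK.
- by rewrite -rc_gt0 Reg normr_gt0.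
Qed.

Lemma unit_ip_sqr_lt1 n (a b : 'rV[CC]_n) (c : RR) : ip a a = 1 -> ip b b = 1 ->
  ip a b = rc c -> ~~ (b <= a)%MS -> c ^+ 2 < 1.
Proof.
move=> a1 b1 abc nba; set z := b - rc c *: a.
have zz : ip z z = rc (1 - c ^+ 2).
  have ba : ip b a = rc c by rewrite ipC abc rcJ.
  by rewrite ipBl !ipBr !ipZl !ipZr rcJ a1 b1 abc ba !rcE rc1; ring.
have nz_z : z != 0.
  apply: contra nba; rewrite subr_eq0 => /eqP ->.
  exact: scalemx_sub (submx_refl _).
have : 0 < ip z z by rewrite lt_def ip_eq0 nz_z ip_ge0.
by rewrite zz rc_gt0 subr_gt0.
Qed.

Section PQMModel.
Variables (d : nat) (M : Lstruct d).
Hypothesis hM : PQM_model M.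
Implicit Types (x : dom M) (p q : subsp d).

Lemma rel_top x : rel_ M x (stop d).
Proof. by case: hM => _ []. Qed.

Lemma rel_sub x p q : rel_ M x p -> (smx p <= smx q)%MS -> rel_ M x q.
Proof. by case: hM => _ [_ [Hle _]] xp spq; exact: Hle spq x xp. Qed.

Lemma rel_meet_compatible x p q :
  compatible p q -> rel_ M x p -> rel_ M x q -> rel_ M x (smeet p q).
Proof. by case: hM => _ [_ [_ [Hmeet _]]] cpq; exact: Hmeet cpq x. Qed.

Lemma rel_pi x p q : rel_ M x p -> rel_ M (pi_ M q x) (sasaki p q).
Proof. by case: hM => _ [_ [_ [_ [Hpi _]]]]; exact: Hpi. Qed.

Lemma rel_pi_bot x q : rel_ M (pi_ M q x) (sbot d) -> rel_ M x (sperp q).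
Proof. by case: hM => _ [_ [_ [_ [_ [_ [Hbot _]]]]]]; exact: Hbot. Qed.

Lemma rel_orth_bot x p q : rel_ M x p -> rel_ M x q ->
  (smx p <= perpmx (smx q))%MS -> rel_ M x (sbot d).
Proof.
move=> xp xq /compatible_orth[cpq <-]; exact: rel_meet_compatible.
Qed.

Lemma rel_sasaki x p q : rel_ M x p -> rel_ M x q -> rel_ M x (sasaki p q).
Proof.
move=> xp xq; set r := sjoin (sperp q) p.
have xr : rel_ M x r by apply: rel_sub xp _; rewrite smx_join addsmxSr.
have crq : compatible r q by apply: compatible_perp_sub; rewrite smx_join addsmxSl.
apply: rel_sub (rel_meet_compatible crq xr xq) _.
by rewrite smx_meet smx_sasaki capmxC capmxS // smx_join addsmxS // smx_perp.
Qed.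

Lemma rel_pi_perp x p (K : 'M[CC]_d) : rel_ M x p -> (K <= smx p)%MS ->
  rel_ M (pi_ M (sperp (mkS K)) x) (mkS (perpmx K :&: smx p)%MS).
Proof.
move=> xp sKp; apply: rel_sub (rel_pi _ xp) _.
rewrite smx_sasaki smxE capmxS ?smx_perp ?(eqmx_perpmx (smxE K)) //.
by rewrite addsmx_sub submx_refl andbT -smx_perp smx_perpK.
Qed.

Lemma rel_pi_rejection x (a N : 'rV[CC]_d) : N != 0 -> rel_ M x (lineS a) ->
  rel_ M (pi_ M (sperp (lineS N)) x) (lineS (rejection N a)).
Proof.
move=> nzN xa; apply: rel_sub (rel_pi _ xa) _; rewrite smx_line.
set S := smx _.
have eqQ : (smx (sperp (lineS N)) :=: perpmx N)%MS.
  exact: eqmx_trans (smx_perp _) (eqmx_perpmx (smx_line _)).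
have SN : (S <= perpmx N)%MS by rewrite smx_sasaki -eqQ capmxSl.
have SNa : (S <= N + a)%MS.
  rewrite smx_sasaki (submx_trans (capmxSr _ _)) // addsmxS ?smx_line //.
  by rewrite (eqmx_perpmx eqQ) perpmxK.
rewrite -(projmx_perp SN) -projmx_rV (submx_trans (submxMr _ SNa)) //.
by rewrite addsmxMr addsmx_sub projmx_self // sub0mx submx_refl.
Qed.

Lemma rel_line_of_orth_rejections x (a b N : 'rV[CC]_d) : N != 0 ->
  ip (rejection N a) (rejection N b) = 0 ->
  rel_ M x (lineS a) -> rel_ M x (lineS b) -> rel_ M x (lineS N).
Proof.
move=> nzN ab0 xa xb.
have xbot : rel_ M (pi_ M (sperp (lineS N)) x) (sbot d).
  apply: rel_orth_bot (rel_pi_rejection nzN xa) (rel_pi_rejection nzN xb) _.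
  by rewrite smx_line (eqmx_perpmx (smx_line _)) sub_perpmx_rV ab0.
by apply: rel_sub (rel_pi_bot xbot) _; rewrite smx_perpK smx_line genmxE.
Qed.

Section Frame.
Variables (a b w : 'rV[CC]_d) (c : RR).
Hypotheses (a1 : ip a a = 1) (b1 : ip b b = 1) (w1 : ip w w = 1).
Hypotheses (abc : ip a b = rc c) (aw0 : ip a w = 0) (bw0 : ip b w = 0).
Hypotheses (c_gt0 : 0 < c) (c_lt1 : c < 1).

Let ba : ip b a = rc c. Proof. by rewrite ipC abc rcJ. Qed.
Let wa0 : ip w a = 0. Proof. by rewrite ipC aw0 conjC0. Qed.
Let wb0 : ip w b = 0. Proof. by rewrite ipC bw0 conjC0. Qed.
Let c1_neq0 : 1 - c != 0. Proof. by rewrite gt_eqF // subr_gt0. Qed.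
Let c1'_neq0 : 1 + c != 0. Proof. by rewrite gt_eqF //; have := c_gt0; lra. Qed.
Let c2_neq1R : 1 - c ^+ 2 != 0.
Proof. by rewrite gt_eqF // expr2; have := c_gt0; have := c_lt1; nra. Qed.
Let c2_neq1 : 1 - rc c ^+ 2 != 0.
Proof. by rewrite -rcX -rc1 -rcB rc_eq0. Qed.

(* The vector of span(a, b, w) with [ip a (frame_vec s t g) = s],
   [ip (frame_vec s t g) b = t] and component [g] along [w]. *)
Definition frame_vec (s t g : RR) : 'rV[CC]_d :=
  rc ((s - c * t) / (1 - c ^+ 2)) *: a + rc ((t - c * s) / (1 - c ^+ 2)) *: b
  + rc g *: w.

Lemma ip_frame_vec s1 t1 g1 s2 t2 g2 :
  ip (frame_vec s1 t1 g1) (frame_vec s2 t2 g2) =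
  rc ((s1 * s2 + t1 * t2 - c * (s1 * t2 + t1 * s2)) / (1 - c ^+ 2) + g1 * g2).
Proof.
rewrite !ipDl !ipDr !ipZl !ipZr !rcJ a1 b1 w1 abc ba aw0 wa0 bw0 wb0 !rcE.
by field; exact: c2_neq1.
Qed.

Lemma ip_a_frame_vec s t g : ip a (frame_vec s t g) = rc s.
Proof. by rewrite !ipDr !ipZr !rcJ a1 abc aw0 !rcE; field; exact: c2_neq1. Qed.

Lemma ip_frame_vec_b s t g : ip (frame_vec s t g) b = rc t.
Proof. by rewrite !ipDl !ipZl b1 abc wb0 !rcE; field; exact: c2_neq1. Qed.

Lemma rel_frame_vec x s t g : s * t = c -> ip (frame_vec s t g) (frame_vec s t g) = 1 ->
  rel_ M x (lineS a) -> rel_ M x (lineS b) -> rel_ M x (lineS (frame_vec s t g)).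
Proof.
move=> stc V1 xa xb; have nzV : frame_vec s t g != 0 by rewrite -ip_eq0 V1 oner_eq0.
apply: (rel_line_of_orth_rejections nzV _ xa xb).
by rewrite ip_rejection // V1 abc ip_a_frame_vec ip_frame_vec_b -rcM stc divr1 subrr.
Qed.

Lemma rel_frame_bot x : 3 * c <= 1 ->
  rel_ M x (lineS a) -> rel_ M x (lineS b) -> rel_ M x (sbot d).
Proof.
move=> c3 xa xb; have [s [t [stc sstt]]] := exists_orth_coords c_gt0 c3.
have tsc : t * s = c by rewrite mulrC.
set g := Num.sqrt (c / (1 - c)).
have gg : g * g = c / (1 - c).
  by apply: sqrtr_sqr; rewrite divr_ge0 // ?subr_ge0 ltW.
have V1 : ip (frame_vec s t g) (frame_vec s t g) = 1.
  by rewrite ip_frame_vec -rc1 stc tsc sstt gg; congr rc; field; rewrite c1_neq0 c2_neq1R.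
have V2 : ip (frame_vec t s (- g)) (frame_vec t s (- g)) = 1.
  rewrite ip_frame_vec -rc1 tsc stc (addrC (t * t)) sstt mulrNN gg; congr rc; field.
  by rewrite c1_neq0 c2_neq1R.
have V12 : ip (frame_vec s t g) (frame_vec t s (- g)) = 0.
  rewrite ip_frame_vec -rc0 stc tsc sstt mulrN gg; congr rc; field.
  by rewrite c1_neq0 c2_neq1R.
apply: rel_orth_bot (rel_frame_vec stc V1 xa xb) (rel_frame_vec tsc V2 xa xb) _.
by rewrite smx_line (eqmx_perpmx (smx_line _)) sub_perpmx_rV V12.
Qed.

Lemma rel_frame_step x : 1 < 3 * c ->
  rel_ M x (lineS a) -> rel_ M x (lineS b) ->
  exists N1 N2 : 'rV[CC]_d, [/\ ip N1 N1 = 1, ip N2 N2 = 1,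
    ip N1 N2 = rc ((3 * c - 1) / (1 + c)), rel_ M x (lineS N1) & rel_ M x (lineS N2)].
Proof.
move=> c3 xa xb; set s := Num.sqrt c; set g := Num.sqrt ((1 - c) / (1 + c)).
have ssc : s * s = c by apply: sqrtr_sqr; rewrite ltW.
have gg : g * g = (1 - c) / (1 + c).
  by apply: sqrtr_sqr; rewrite divr_ge0 //; have := c_gt0; have := c_lt1; lra.
have V1 : ip (frame_vec s s g) (frame_vec s s g) = 1.
  rewrite ip_frame_vec -rc1 ssc gg; congr rc; field.
  by rewrite c1'_neq0 c2_neq1R.
have V2 : ip (frame_vec s s (- g)) (frame_vec s s (- g)) = 1.
  rewrite ip_frame_vec -rc1 ssc mulrNN gg; congr rc; field.
  by rewrite c1'_neq0 c2_neq1R.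
exists (frame_vec s s g), (frame_vec s s (- g)); split=> //;
  try exact: rel_frame_vec ssc _ xa xb.
rewrite ip_frame_vec ssc mulrN gg; congr rc; field.
by rewrite c1'_neq0 c2_neq1R.
Qed.

End Frame.

Hypothesis d_gt2 : (2 < d)%N.

(* The bound is preserved when [c] becomes [(3c - 1)/(1 + c)] and [n]
   decreases, and at [n = 0] it forces [3c <= 1]. *)
Lemma rel_unit_lines_bot_iter n x (a b : 'rV[CC]_d) (c : RR) :
  ip a a = 1 -> ip b b = 1 -> ip a b = rc c -> 0 < c -> c < 1 ->
  2 <= (n%:R + 3) * (1 - c) ->
  rel_ M x (lineS a) -> rel_ M x (lineS b) -> rel_ M x (sbot d).
Proof.
elim: n x a b c => [|n IHn] x a b c a1 b1 abc c_gt0 c_lt1 bound xa xb;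
  have [w [w1 aw0 bw0]] := exists_unit_orth2 a b d_gt2.
  apply: rel_frame_bot a1 b1 w1 abc aw0 bw0 c_gt0 c_lt1 x _ xa xb.
  by move: bound; lra.
have [c3|c3] := lerP (3 * c) 1.
  exact: rel_frame_bot a1 b1 w1 abc aw0 bw0 c_gt0 c_lt1 x c3 xa xb.
have [N1 [N2 [N1_1 N2_1 N12 xN1 xN2]]] :=
  rel_frame_step a1 b1 w1 abc aw0 bw0 c_gt0 c_lt1 c3 xa xb.
have c1_gt0 : 0 < 1 + c by lra.
apply: IHn N1_1 N2_1 N12 _ _ _ xN1 xN2.
- by rewrite divr_gt0 //; lra.
- by rewrite ltr_pdivrMr //; lra.
have -> : (n%:R + 3) * (1 - (3 * c - 1) / (1 + c)) =
  2 * ((n%:R + 3) * (1 - c)) / (1 + c) by field; rewrite gt_eqF.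
by rewrite ler_pdivlMr //; move: bound; rewrite -natr1; nra.
Qed.

Lemma rel_unit_lines_bot x (a b : 'rV[CC]_d) (c : RR) :
  ip a a = 1 -> ip b b = 1 -> ip a b = rc c -> 0 < c -> c < 1 ->
  rel_ M x (lineS a) -> rel_ M x (lineS b) -> rel_ M x (sbot d).
Proof.
move=> a1 b1 abc c_gt0 c_lt1 xa xb; have c1_gt0 : 0 < 1 - c by rewrite subr_gt0.
have := @archi_boundP _ (2 / (1 - c)); rewrite divr_ge0 ?ltW // ltr_pdivrMr //.
move: (Num.bound _) => k /(_ isT) bound.
have k_ge0 : (0 : RR) <= k%:R by rewrite ler0n.
apply: (rel_unit_lines_bot_iter (n := k) a1 b1 abc c_gt0 c_lt1 _ xa xb).
by move: bound k_ge0 c1_gt0; nra.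
Qed.

Lemma rel_lines_bot x (u v : 'rV[CC]_d) : u != 0 -> ~~ (v <= u)%MS ->
  rel_ M x (lineS u) -> rel_ M x (lineS v) -> rel_ M x (sbot d).
Proof.
move=> nz_u nvu xu xv; have nz_v : v != 0 by apply: contraNneq nvu => ->; exact: sub0mx.
have [u1 u1_1 eq_u1] := exists_unit_eqmx nz_u.
have [v0 v0_1 eq_v0] := exists_unit_eqmx nz_v.
rewrite -(lineS_eqmx eq_u1) in xu; rewrite -(lineS_eqmx eq_v0) in xv.
have [uv0|nz_uv] := eqVneq (ip u1 v0) 0.
  apply: rel_orth_bot xu xv _.
  by rewrite smx_line (eqmx_perpmx (smx_line _)) sub_perpmx_rV uv0.
have [c [v1 [eq_v1 v1_1 uvc c_gt0]]] := exists_phase_real_ip v0_1 nz_uv.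
rewrite -(lineS_eqmx eq_v1) in xv.
have : c ^+ 2 < 1 by apply: unit_ip_sqr_lt1 u1_1 v1_1 uvc _; rewrite eq_v1 eq_v0 eq_u1.
rewrite expr2 => c2_lt1; have c_lt1 : c < 1 by move: c2_lt1 c_gt0; nra.
exact: rel_unit_lines_bot u1_1 v1_1 uvc c_gt0 c_lt1 xu xv.
Qed.

Lemma rel_rank1_bot x p q :
  (\rank (smx p) <= 1)%N -> (\rank (smx q) <= 1)%N -> (smx p :&: smx q <= (0 : 'M_d))%MS ->
  rel_ M x p -> rel_ M x q -> rel_ M x (sbot d).
Proof.
move=> /mxrank_le1_lineS[p0 _ _ xp _|[u nz_u ->]].
  by apply: rel_sub xp _; rewrite p0 sub0mx.
move=> /mxrank_le1_lineS[q0 _ _ xq|[v nz_v ->]].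
  by apply: rel_sub xq _; rewrite q0 sub0mx.
move=> uv0; apply: rel_lines_bot nz_u _; apply: contra nz_v => vu.
by rewrite -submx0 (submx_trans _ uv0) // sub_capmx !smx_line vu submx_refl.
Qed.

Lemma rel_meet_corank1 x p q : rel_ M x p -> rel_ M x q ->
  (\rank (smx p :&: smx q) + 1 = \rank (smx p))%N -> rel_ M x (smeet p q).
Proof.
move=> xp xq rK; set K := (smx p :&: smx q)%MS.
set P := (perpmx K :&: smx p)%MS; set Q := (perpmx K :&: smx q)%MS.
have yP : rel_ M (pi_ M (sperp (mkS K)) x) (mkS P) by apply: rel_pi_perp xp (capmxSl _ _).
have yQ : rel_ M (pi_ M (sperp (mkS K)) x) (mkS Q) by apply: rel_pi_perp xq (capmxSr _ _).
have rP : \rank P = 1%N.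
  have rPK : (\rank P + \rank K = \rank (smx p))%N := mxrank_perpmx_cap (capmxSl _ _).
  have rKp : (\rank K + 1 = \rank (smx p))%N := rK.
  lia.
have PQ0 : (P :&: Q)%MS = 0.
  apply: (@perpmx_sub0 _ _ _ _ K).
    rewrite /K sub_capmx (submx_trans (capmxSl _ _) (capmxSr _ _)).
    exact: submx_trans (capmxSr _ _) (capmxSr _ _).
  exact: submx_trans (capmxSl _ _) (capmxSl _ _).
have ybot : rel_ M (pi_ M (sperp (mkS K)) x) (sbot d).
  apply: (rel_rank1_bot (q := sasaki (mkS P) (mkS Q))) yP (rel_sasaki yP yQ).
  - by rewrite smxE rP.
  - by rewrite smx_sasaki_mkS (leq_trans (mxrank_sasaki_le _ _)) ?rP.
  - rewrite (cap_eqmx (smxE P) (smx_sasaki_mkS P Q)) -PQ0.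
    by rewrite capmxS // capmxSl.
by apply: rel_sub (rel_pi_bot ybot) _; rewrite smx_perpK smx_meet.
Qed.

Lemma filter_principal x : exists k, forall p, rel_ M x p <-> sle k p.
Proof.
apply: principal_filter; [exact: rel_sub | exact: rel_top |].
by move=> p q; apply: P_meet_of_corank1 => //; [exact: rel_sub | exact: rel_meet_corank1].
Qed.

End PQMModel.

Theorem mainTheorem10 (d : nat) (hd : (3 <= d)%N) (M : Lstruct d) (hM : PQM_model M) :
  exists kappa : dom M -> subsp d,
    forall (m : dom M) (p : subsp d), filt m p <-> sle (kappa m) p.
Proof.
exists (fun m => proj1_sig (constructive_indefinite_description _ (filter_principal hM hd m))).
by move=> m p; case: constructive_indefinite_description.
Qed.
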